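(* Let $n\ge 3$, $0<m<\frac{n-2}{n}$, $\rho>0$, and let $\alpha,\beta$ satisfy $\alpha=\frac{2\beta+\rho}{1-m}$, $\beta>\frac{m\rho}{n-2-mn}$, and $\alpha>n\beta$. Let $v$ be a radially symmetric solution of $$\frac{n-1}{m}\Delta v^m+\alpha v+\beta x\cdot\nabla v=0,\quad v>0,\quad\text{in }\mathbb{R}^n,$$ let $w(r)=r^2v(r)^{1-m}$ and $w_\infty=\frac{2(n-1)(n(1-m)-2)}{(1-m)(\alpha(1-m)-2\beta)}$. Then there exists a constant $\varepsilon\in(0,\min(1,w_\infty/2))$ such that for every $R_0>1$ there exists $r'>R_0$ with $w(r')\ge\varepsilon$.
   Context: $v(r)$ denotes the value of the radially symmetric function $v$ at any point with $|x|=r$. *)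

From HB Require Import structures.
From mathcomp Require Import all_boot all_order all_algebra.
From mathcomp Require Import all_classical all_reals all_analysis.
Set Implicit Arguments. Unset Strict Implicit. Unset Printing Implicit Defensive.
Import Order.TTheory GRing.Theory Num.Theory.
Import numFieldNormedType.Exports.
Local Open Scope ring_scope.

(* Euclidean norm |x| on R^n (the library norm on matrices is the sup norm). *)
Definition enorm {R : realType} {n : nat} (x : 'rV[R]_n) : R :=
  Num.sqrt (\sum_(i < n) x ord0 i ^+ 2).

Definition ebasis {R : realType} {n : nat} (i : 'I_n) : 'rV[R]_n :=
  delta_mx ord0 i.

Definition partial {R : realType} {n : nat} (f : 'rV[R]_n -> R) (i : 'I_n)
  (x : 'rV[R]_n) : R := derive f x (ebasis i).

Definition laplacian {R : realType} {n : nat} (f : 'rV[R]_n -> R)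
  (x : 'rV[R]_n) : R := \sum_(i < n) partial (partial f i) i x.

Definition xdotgrad {R : realType} {n : nat} (f : 'rV[R]_n -> R)
  (x : 'rV[R]_n) : R := \sum_(i < n) x ord0 i * partial f i x.

Definition is_solution {R : realType} {n : nat} (m alpha beta : R)
  (v : 'rV[R]_n -> R) : Prop :=
  forall x : 'rV[R]_n,
    [/\ 0 < v x,
        differentiable v x,
        differentiable (fun y => v y `^ m) x,
        (forall i : 'I_n, differentiable (partial (fun y => v y `^ m) i) x) &
        (n%:R - 1) / m * laplacian (fun y => v y `^ m) x
          + alpha * v x + beta * xdotgrad v x = 0].

Definition radial_profile {R : realType} {n : nat} (v : 'rV[R]_n -> R)
  (phi : R -> R) : Prop :=
  forall x : 'rV[R]_n, v x = phi (enorm x).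

From HB Require Import structures.
From mathcomp Require Import all_boot all_order all_algebra.
From mathcomp Require Import all_classical all_reals all_analysis.
From mathcomp Require Import ring lra.
Import Order.TTheory GRing.Theory Num.Theory.
Import numFieldNormedType.Exports.
Local Open Scope ring_scope.

(* Along a coordinate axis, write [u = v^m] and [z = r u'/u] for the elasticity of [u].
   The equation becomes [r z' = - z (n - 2 + z) - w (m alpha + beta z) / (n - 1)]
   with [w = r^2 v^(1-m)], and [z] tends to [0] at the origin.  Suppose [w < eps]
   for all large [r].  A barrier argument keeps [z] above [-(n - 2) + eta]; while [z]
   stays below [-m/(1-m)] the right-hand side is bounded below by a positive constant,
   so [z] grows like [log r] and must cross [-m/(1-m)], after which it stays above it.
   From then on [r v^(1-m)] is nondecreasing, so [w = r * r v^(1-m)] is unbounded. *)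

Section RealFunctions.
Context {R : realType}.
Local Open Scope classical_set_scope.
Implicit Types (f df : R -> R) (a b L : R).

Lemma is_derive_cvg {f : R -> R} {x d : R} : is_derive x (1 : R) f d -> f @ x --> f x.
Proof. by case=> /derivable1_diffP/differentiable_continuous. Qed.

Lemma cvg_lt_ball {f : R -> R} {s z : R} : f @ s --> f s -> f s < z ->
  exists2 e : R, 0 < e & forall y, `|s - y| < e -> f y < z.
Proof.
move=> cf fz; have := (@nbhs_normP R R^o s (fun t => f t < z)).1 (cvgr_lt _ cf _ fz).
by case=> e /= e0 He; exists e.
Qed.

Lemma cvg_gt_ball {f : R -> R} {s z : R} : f @ s --> f s -> z < f s ->
  exists2 e : R, 0 < e & forall y, `|s - y| < e -> z < f y.
Proof.
move=> cf fz; have := (@nbhs_normP R R^o s (fun t => z < f t)).1 (cvgr_gt _ cf _ fz).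
by case=> e /= e0 He; exists e.
Qed.

Lemma is_derive_ge0_ndecr f df a :
  (forall x, a <= x -> is_derive x (1 : R) f (df x)) ->
  (forall x, a <= x -> 0 <= df x) -> forall b, a <= b -> f a <= f b.
Proof.
move=> fD df_ge0 b ab.
have fD' c : c \in `]a, b[%R -> is_derive c (1 : R) f (df c).
  by rewrite in_itv /= => /andP[/ltW ac _]; exact: fD.
have cf : {within `[a, b], continuous f}.
  apply: derivable_within_continuous => y; rewrite in_itv /= => /andP[ay _].
  by case: (fD y ay).
have [c] := MVT_segment ab fD' cf; rewrite in_itv /= => /andP[ac _] fba.
by rewrite -subr_ge0 fba mulr_ge0 ?df_ge0 // subr_ge0.
Qed.

Lemma last_point_ge {f : R -> R} {a b L : R} : a <= b ->
  (forall x, a <= x -> f @ x --> f x) -> L <= f a -> f b < L ->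
  exists c, [/\ a <= c, c < b, L <= f c & forall y, c < y -> y <= b -> f y < L].
Proof.
move=> ab cf fa fb; pose S := [set x | a <= x /\ x <= b /\ L <= f x].
have S0 : (S !=set0) by exists a.
have Sub : has_ubound S by exists b => x [_ []].
have Sa : a <= sup S by apply: ub_le_sup.
have above y : sup S < y -> y <= b -> f y < L.
  move=> Sy yb; rewrite ltNge; apply/negP => Ly.
  by have := ub_le_sup Sub (conj (le_trans Sa (ltW Sy)) (conj yb Ly)); rewrite leNgt Sy.
have fS : L <= f (sup S).
  rewrite leNgt; apply/negP => fSL.
  have [e e0 He] := cvg_lt_ball (cf _ Sa) fSL.
  have Se : sup S - e < sup S by rewrite ltrBlDr ltrDl.
  have [y Sy ly] := sup_gt S0 Se.
  have ys : y <= sup S := ub_le_sup Sub Sy.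
  have /He : `|sup S - y| < e by rewrite ger0_norm ?subr_ge0 //; lra.
  by case: Sy => _ [_]; rewrite leNgt => /negP.
have Sb : sup S < b.
  rewrite lt_neqAle (ge_sup S0) ?andbT; last by move=> x [_ []].
  by apply/eqP => Sb; move: fb; rewrite -Sb ltNge fS.
by exists (sup S); split.
Qed.

Lemma is_derive_barrier f df a L0 L : L0 < L ->
  (forall x, a <= x -> is_derive x (1 : R) f (df x)) ->
  (forall x, a <= x -> L0 <= f x -> f x <= L -> 0 < df x) ->
  L <= f a -> forall b, a <= b -> L <= f b.
Proof.
move=> L0L fD df_gt0 fa b ab; rewrite leNgt; apply/negP => fb.
have cf x : a <= x -> f @ x --> f x by move/fD/is_derive_cvg.
have [c [ac cb fc above]] := last_point_ge ab cf fa fb.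
have [e e0 He] := cvg_gt_ball (cf _ ac) (lt_le_trans L0L fc).
pose x := Num.min b (c + e / 2).
have cx : c < x by rewrite lt_min cb /= ltrDl divr_gt0.
have xb : x <= b by rewrite ge_min lexx.
have fD' y : y \in `]c, x[%R -> is_derive y (1 : R) f (df y).
  by rewrite in_itv /= => /andP[cy _]; apply: fD; exact: le_trans ac (ltW cy).
have cfx : {within `[c, x], continuous f}.
  apply: derivable_within_continuous => y; rewrite in_itv /= => /andP[cy _].
  by case: (fD y (le_trans ac cy)).
have [y] := MVT cx fD' cfx; rewrite in_itv /= => /andP[cy yx] fxc.
have fyL : f y < L by apply: above => //; exact: le_trans (ltW yx) xb.
have L0y : L0 < f y.
  apply: He; rewrite ltr0_norm ?subr_lt0 // opprB.
  have xce : x <= c + e / 2 by rewrite ge_min lexx orbT.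
  have e2 : e / 2 < e by rewrite ltr_pdivrMr // ltr_pMr // ltr1n.
  lra.
have : f c < f x.
  by rewrite -subr_gt0 fxc mulr_gt0 ?subr_gt0 // df_gt0 ?ltW //; lra.
by have := above x cx xb; lra.
Qed.

Lemma is_derive_mul_ratio {g u : R -> R} {x dg du : R} :
  u x != 0 -> is_derive x (1 : R) g dg -> is_derive x (1 : R) u du ->
  is_derive x (1 : R) (fun r => r * g r / u r)
    (x * dg / u x + g x / u x - x * g x * du / u x ^+ 2).
Proof.
move=> ux Dg Du.
apply: (is_derive_eq (is_deriveM (is_deriveM (is_derive_id x (1 : R)) Dg) (is_deriveV ux Du))).
have sE (k z : R) : k *: z = k * z by [].
have iE : (id * g) x = x * g x by [].
by rewrite !sE iE mulr1; field.
Qed.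

End RealFunctions.

(* [u] and [P] stand for the radial profiles of [v^m] and [v], [u1], [u2] and [P1] for
   their derivatives, and [ode] is the radial form of the equation in dimension [N]. *)
Section Elasticity.
Context {R : realType}.
Variables (N m al be : R) (u u1 u2 P P1 : R -> R).
Implicit Types r x c a b : R.

Definition elasticity (r : R) := r * u1 r / u r.
Definition wprofile (r : R) := r ^+ 2 * P r / u r.
Definition wratio (r : R) := r * P r / u r.
Definition elasticity_rhs (r : R) :=
  - elasticity r * (N - 2 + elasticity r)
  - wprofile r * (m * al + be * elasticity r) / (N - 1).

Hypotheses (m_gt0 : 0 < m) (m_lt1 : m < 1) (N_gt1 : 1 < N).
Hypotheses (be_gt0 : 0 < be) (al_gt0 : 0 < al).
Hypotheses (mal_lt : m * al < be * (N - 2)) (m_lt : m / (1 - m) < N - 2).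
Hypotheses (u_gt0 : forall r : R, 0 < r -> 0 < u r) (P_gt0 : forall r : R, 0 < r -> 0 < P r).
Hypothesis uD : forall r : R, 0 < r -> is_derive r (1 : R) u (u1 r).
Hypothesis u1D : forall r : R, 0 < r -> is_derive r (1 : R) u1 (u2 r).
Hypothesis PD : forall r : R, 0 < r -> is_derive r (1 : R) P (P1 r).
Hypothesis u1_chain : forall r : R, 0 < r -> u1 r * P r = m * u r * P1 r.
Hypothesis ode : forall r : R, 0 < r ->
  (N - 1) / m * (u2 r + (N - 1) * (u1 r / r)) + al * P r + be * (r * P1 r) = 0.
Hypothesis elasticity_near0 : forall c : R, c < 0 -> exists2 r : R, 0 < r & c < elasticity r.

Let m_neq0 : m != 0. Proof. by rewrite gt_eqF. Qed.
Let m1_gt0 : 0 < 1 - m. Proof. by rewrite subr_gt0. Qed.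
Let N1_gt0 : 0 < N - 1. Proof. by rewrite subr_gt0. Qed.

Let P1E r : 0 < r -> P1 r = u1 r * P r / (m * u r).
Proof. by move=> r0; rewrite u1_chain //; field; rewrite m_neq0 gt_eqF ?u_gt0. Qed.

Lemma is_derive_elasticity r : 0 < r ->
  is_derive r (1 : R) elasticity (elasticity_rhs r / r).
Proof.
move=> r0; have ur : u r != 0 by rewrite gt_eqF ?u_gt0.
have D : is_derive r (1 : R) elasticity _ := is_derive_mul_ratio ur (u1D _ r0) (uD _ r0).
apply: (is_derive_eq D).
have u2E : u2 r = - (N - 1) * (u1 r / r)
    - m / (N - 1) * (al * P r + be * (r * P1 r)).
  have {1}-> : u2 r = u2 r - m / (N - 1) * ((N - 1) / m * (u2 r + (N - 1) * (u1 r / r))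
      + al * P r + be * (r * P1 r)) by rewrite ode // mulr0 subr0.
  by field; rewrite m_neq0 !gt_eqF.
rewrite u2E P1E // /elasticity_rhs /elasticity /wprofile.
by field; rewrite ur m_neq0 !gt_eqF.
Qed.

Definition mratio : R := m / (1 - m).
Let mratio_gt0 : 0 < mratio. Proof. by rewrite divr_gt0. Qed.
Let mratio_lt : mratio < N - 2. Proof. exact: m_lt. Qed.

Let eta : R := Num.min ((be * (N - 2) - m * al) / (2 * be)) ((N - 2 - mratio) / 2).
Let zfloor : R := - (N - 2) + eta.
Let zcrit : R := - mratio.
Let drift : R := mratio * eta.
Let wsmall : R := eta * (N - 1) / (2 * (1 - m) * al).

Let eta_gt0 : 0 < eta.
Proof. by rewrite lt_min !divr_gt0 ?mulr_gt0 ?subr_gt0. Qed.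

Let eta_le_gap : be * eta <= (be * (N - 2) - m * al) / 2.
Proof.
have : eta <= (be * (N - 2) - m * al) / (2 * be) by rewrite ge_min lexx.
rewrite -(ler_pM2l be_gt0) => /le_trans; apply.
by rewrite le_eqVlt; apply/orP; left; apply/eqP; field; rewrite gt_eqF.
Qed.

Let zfloor_lt_zcrit : zfloor < zcrit.
Proof.
have : eta <= (N - 2 - mratio) / 2 by rewrite ge_min lexx orbT.
by have := eta_gt0; have := mratio_lt; rewrite /zfloor /zcrit; lra.
Qed.

Let wprofile_gt0 x : 0 < x -> 0 < wprofile x.
Proof. by move=> x0; rewrite divr_gt0 ?mulr_gt0 ?exprn_gt0 ?P_gt0 ?u_gt0. Qed.

Lemma elasticity_eventually_ge :
  exists2 r0, 0 < r0 & forall x, r0 <= x -> zfloor <= elasticity x.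
Proof.
have zfloor_lt0 : zfloor < 0.
  by have := zfloor_lt_zcrit; have := mratio_gt0; rewrite /zcrit; lra.
have [r0 r0_gt0 zr0] := elasticity_near0 _ zfloor_lt0.
exists r0 => //; apply: (@is_derive_barrier _ _ (fun x => elasticity_rhs x / x) _ (- (N - 2))).
- by have := eta_gt0; rewrite /zfloor; lra.
- by move=> x /(lt_le_trans r0_gt0) /is_derive_elasticity.
- move=> x /(lt_le_trans r0_gt0) x0 zx_ge zx_le; apply: divr_gt0 => //.
  rewrite /elasticity_rhs mulrAC.
  have := wprofile_gt0 x x0; have := eta_le_gap.
  move: zx_ge zx_le; set z := elasticity x; set W := wprofile x => z_ge z_le gap W0.
  have WN_gt0 : 0 < W / (N - 1) by rewrite divr_gt0.
  have : 0 <= - z * (N - 2 + z) by apply: mulr_ge0; lra.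
  have bez : be * z <= be * zfloor by rewrite ler_pM2l.
  have : m * al + be * z < 0 by move: bez; rewrite /zfloor mulrDr; have := mal_lt; lra.
  by rewrite -(pmulr_rlt0 _ WN_gt0); lra.
- exact: ltW.
Qed.

Lemma elasticity_rhs_ge_drift x : 0 < x -> wprofile x < wsmall ->
  zfloor <= elasticity x -> elasticity x <= zcrit -> drift / 2 <= elasticity_rhs x.
Proof.
move=> x0 Wx; rewrite /elasticity_rhs /zfloor /zcrit.
have := wprofile_gt0 x x0; move: Wx.
set z := elasticity x; set W := wprofile x => Wx W0 z_ge z_le; clearbody z W.
have : drift <= - z * (N - 2 + z).
  apply: ler_pM; [exact: ltW mratio_gt0 | exact: ltW eta_gt0 | |].
    by move: z_le; lra.
  by move: z_ge; lra.
have : W * (m * al + be * z) / (N - 1) <= drift / 2.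
  rewrite mulrAC.
  have bez : be * z <= 0 by rewrite pmulr_rle0 //; move: z_le; have := mratio_gt0; lra.
  apply: (@le_trans _ _ (W / (N - 1) * (m * al))).
    by rewrite ler_wpM2l ?divr_ge0 ?(ltW W0) ?(ltW N1_gt0) //; move: bez; lra.
  apply: (@le_trans _ _ (wsmall / (N - 1) * (m * al))).
    by rewrite ler_wpM2r ?mulr_ge0 ?(ltW m_gt0) ?(ltW al_gt0) // ler_pM2r ?invr_gt0 // ltW.
  rewrite le_eqVlt; apply/orP; left; apply/eqP.
  by rewrite /drift /wsmall /mratio; field; rewrite !gt_eqF.
lra.
Qed.

Let drift_gt0 : 0 < drift. Proof. exact: mulr_gt0. Qed.
Let wsmall_gt0 : 0 < wsmall. Proof. by rewrite !divr_gt0 ?mulr_gt0. Qed.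

(* Below [zcrit] the elasticity grows at least like [drift / 2 * ln r]. *)
Lemma elasticity_reaches_zcrit {R1 : R} : 0 < R1 ->
  (forall x, R1 <= x -> wprofile x < wsmall) ->
  (forall x, R1 <= x -> zfloor <= elasticity x) ->
  exists2 r2, R1 <= r2 & zcrit <= elasticity r2.
Proof.
move=> R1_gt0 Wsmall z_ge.
have [//|no_r2] := pselect (exists2 r2, R1 <= r2 & zcrit <= elasticity r2).
have z_lt x : R1 <= x -> elasticity x < zcrit.
  by move=> x1; rewrite ltNge; apply/negP => zx; apply: no_r2; exists x.
pose g x := elasticity x - drift / 2 * ln x.
have g_ndecr : forall b, R1 <= b -> g R1 <= g b.
  apply: (@is_derive_ge0_ndecr _ _ (fun x => elasticity_rhs x / x - drift / 2 * x^-1)).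
    move=> x /(lt_le_trans R1_gt0) x0.
    apply: (is_derive_eq (is_deriveB (is_derive_elasticity x x0)
                                     (is_deriveZ _ (is_derive1_ln x0)))).
    by [].
  move=> x x1; have x0 := lt_le_trans R1_gt0 x1.
  rewrite subr_ge0 ler_pM2r ?invr_gt0 //.
  by apply: elasticity_rhs_ge_drift; [| exact: Wsmall | exact: z_ge | exact/ltW/z_lt].
pose b := expR (ln R1 + 2 * (zcrit - zfloor) / drift).
have R1b : R1 <= b.
  rewrite -[leLHS]lnK ?posrE // ler_expR lerDl divr_ge0 ?(ltW drift_gt0) //.
  by rewrite mulr_ge0 // subr_ge0 ltW.
have := g_ndecr b R1b; rewrite /g expRK.
have -> : drift / 2 * (ln R1 + 2 * (zcrit - zfloor) / drift)
    = drift / 2 * ln R1 + (zcrit - zfloor) by field; rewrite gt_eqF.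
by have := z_lt b R1b; have := z_ge R1 (lexx R1); lra.
Qed.

Lemma elasticity_stays_ge_zcrit {r2 : R} : 0 < r2 ->
  (forall x, r2 <= x -> wprofile x < wsmall) -> zcrit <= elasticity r2 ->
  forall x, r2 <= x -> zcrit <= elasticity x.
Proof.
move=> r2_gt0 Wsmall.
apply: (@is_derive_barrier _ _ (fun x => elasticity_rhs x / x) _ zfloor) => //.
  by move=> x /(lt_le_trans r2_gt0) /is_derive_elasticity.
move=> x x2 z_ge z_le; have x0 := lt_le_trans r2_gt0 x2.
apply: (@lt_le_trans _ _ (drift / 2 / x)); first by rewrite !divr_gt0.
by rewrite ler_pM2r ?invr_gt0 // elasticity_rhs_ge_drift // Wsmall.
Qed.

(* [wratio r = r v(r)^(1-m)] has logarithmic derivative [(1 - m) / m * (z + mratio) / r]. *)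
Lemma wratio_ndecr {a} : 0 < a -> (forall x, a <= x -> zcrit <= elasticity x) ->
  forall b, a <= b -> wratio a <= wratio b.
Proof.
move=> a_gt0 z_ge.
apply: (@is_derive_ge0_ndecr _ _
  (fun x => P x / u x * ((1 - m) / m * (elasticity x + mratio)))).
  move=> x /(lt_le_trans a_gt0) x0; have ux : u x != 0 by rewrite gt_eqF ?u_gt0.
  apply: (is_derive_eq (is_derive_mul_ratio ux (PD _ x0) (uD _ x0))).
  by rewrite P1E // /elasticity /mratio; field; rewrite ux m_neq0 gt_eqF.
move=> x xa; have x0 := lt_le_trans a_gt0 xa.
apply: mulr_ge0; first by rewrite divr_ge0 // ltW ?P_gt0 ?u_gt0.
apply: mulr_ge0; first by rewrite divr_ge0 // ltW.
by have := z_ge x xa; rewrite /zcrit; lra.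
Qed.

Lemma wprofileE r : wprofile r = r * wratio r.
Proof. by rewrite /wprofile /wratio expr2 !mulrA. Qed.

Lemma wprofile_frequently_ge :
  exists2 e, 0 < e & forall R0 : R, exists r, R0 < r /\ e <= wprofile r.
Proof.
exists wsmall => // R0.
have [//|no_r] := pselect (exists r, R0 < r /\ wsmall <= wprofile r).
have W_lt x : R0 < x -> wprofile x < wsmall.
  by move=> x0; rewrite ltNge; apply/negP => Wx; apply: no_r; exists x.
have [r0 r0_gt0 z_ge] := elasticity_eventually_ge.
pose R1 := Num.max R0 r0 + 1.
have R0R1 : R0 < R1 by rewrite /R1 ltr_pwDr // le_max lexx.
have r0R1 : r0 < R1 by rewrite /R1 ltr_pwDr // le_max lexx orbT.
have R1_gt0 : 0 < R1 := lt_trans r0_gt0 r0R1.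
have W1 x : R1 <= x -> wprofile x < wsmall.
  by move=> x1; apply: W_lt; exact: lt_le_trans R0R1 x1.
have Z1 x : R1 <= x -> zfloor <= elasticity x.
  by move=> x1; apply: z_ge; exact: le_trans (ltW r0R1) x1.
have [r2 R1r2 zr2] := elasticity_reaches_zcrit R1_gt0 W1 Z1.
have r2_gt0 : 0 < r2 := lt_le_trans R1_gt0 R1r2.
have W2 x : r2 <= x -> wprofile x < wsmall.
  by move=> x2; apply: W_lt; exact: lt_le_trans R0R1 (le_trans R1r2 x2).
have wratio_ndecr_r2 := wratio_ndecr r2_gt0 (elasticity_stays_ge_zcrit r2_gt0 W2 zr2).
have wratio_r2_gt0 : 0 < wratio r2 by rewrite divr_gt0 ?mulr_gt0 ?P_gt0 ?u_gt0.
pose b := r2 + wsmall / wratio r2.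
have r2b : r2 <= b by rewrite /b lerDl; apply/ltW/divr_gt0.
have : b * wratio r2 <= b * wratio b.
  by rewrite ler_pM2l ?wratio_ndecr_r2 // (lt_le_trans r2_gt0).
have -> : b * wratio r2 = r2 * wratio r2 + wsmall by rewrite /b mulrDl divfK // gt_eqF.
have := W2 b r2b; have := mulr_gt0 r2_gt0 wratio_r2_gt0; rewrite wprofileE; lra.
Qed.

End Elasticity.

Section RadialCalculus.
Context {R : realType} {n : nat}.
Local Open Scope classical_set_scope.
Implicit Types (g : 'rV[R]_n -> R) (r s t : R).

Let diff_quotient_transfer {g} {g1 : R -> R} {x e : 'rV[R]_n} {t} :
  (forall h : R, g (h *: e + x) = g1 (h + t)) -> g x = g1 t ->
  (fun h : R => h^-1 *: ((g \o shift x) (h *: e) - g x)) =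
  (fun h : R => h^-1 *: ((g1 \o shift t) (h *: (1 : R)) - g1 t)).
Proof. by move=> gE g0; apply/funext => h /=; rewrite gE g0 [h *: 1]mulr1. Qed.

Lemma derive_transfer {g} {g1 : R -> R} {x e : 'rV[R]_n} {t} :
  (forall h : R, g (h *: e + x) = g1 (h + t)) -> g x = g1 t ->
  derive g x e = derive g1 t 1.
Proof. by move=> gE g0; rewrite /derive (diff_quotient_transfer gE g0). Qed.

Lemma is_derive_along g (e : 'rV[R]_n) s :
  derivable g (s *: e) e ->
  is_derive s (1 : R) (fun t => g (t *: e)) (derive g (s *: e) e).
Proof.
pose g1 t := g (t *: e).
have gE h : g (h *: e + s *: e) = g1 (h + s) by rewrite /g1 scalerDl.
move=> dg; split; last by rewrite (derive_transfer gE).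
by move: dg; rewrite /derivable (diff_quotient_transfer gE).
Qed.

Lemma ebasisE (i j : 'I_n) : (ebasis i : 'rV[R]_n) ord0 j = (j == i)%:R.
Proof. by rewrite /ebasis mxE eqxx. Qed.

Lemma enorm_scale_ebasis (i : 'I_n) s : enorm (s *: (ebasis i : 'rV[R]_n)) = `|s|.
Proof.
rewrite /enorm (bigD1 i) //= big1 => [|j ji].
  by rewrite mxE ebasisE eqxx mulr1 addr0 sqrtr_sqr.
by rewrite mxE ebasisE (negbTE ji) mulr0 expr0n.
Qed.

Lemma enorm_ebasis2 (i0 i : 'I_n) s t : i != i0 ->
  enorm (s *: (ebasis i0 : 'rV[R]_n) + t *: ebasis i) = Num.sqrt (s ^+ 2 + t ^+ 2).
Proof.
move=> ii0; rewrite /enorm (bigD1 i0) //= (bigD1 i) //= big1 => [|j /andP[ji0 ji]].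
  by rewrite !mxE !eqxx /= (eq_sym i0 i) (negbTE ii0) !mulr0 !mulr1 addr0 add0r addr0.
by rewrite !mxE /= (negbTE ji0) (negbTE ji) !mulr0 addr0 expr0n.
Qed.

Lemma is_derive_hypot r t : 0 < r ->
  is_derive t (1 : R) (fun h : R => Num.sqrt (r ^+ 2 + h ^+ 2))
    (t / Num.sqrt (r ^+ 2 + t ^+ 2)).
Proof.
move=> r0; have q0 : 0 < r ^+ 2 + t ^+ 2 by rewrite ltr_pwDl ?sqr_ge0 ?exprn_gt0.
have Dq : is_derive t (1 : R) (fun h : R => r ^+ 2 + h ^+ 2) (2 * t).
  apply: (is_derive_eq (is_deriveD (is_derive_cst (r ^+ 2) t 1)
          (is_deriveX 2 (is_derive_id t (1 : R))))).
  by rewrite add0r /= expr1 [_ *: _]mulr1.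
apply: (is_derive_eq
  (is_derive1_comp (g := fun h : R => r ^+ 2 + h ^+ 2) (is_derive1_sqrt q0) Dq)).
by field; rewrite gt_eqF // sqrtr_gt0.
Qed.

Section OffAxis.
Variables (f : 'rV[R]_n -> R) (i0 i : 'I_n) (f1 : R -> R).
Hypothesis i_neq_i0 : i != i0.
Hypothesis f_radial : forall y, f y = f (enorm y *: ebasis i0).
Hypothesis f_axisD :
  forall s, 0 < s -> is_derive s (1 : R) (fun s => f (s *: ebasis i0)) (f1 s).

(* On the line [r e_i0 + t e_i] a radial function only sees the distance [sqrt (r^2 + t^2)]. *)
Lemma partial_off_axis r t : 0 < r ->
  partial f i (r *: ebasis i0 + t *: ebasis i) =
    f1 (Num.sqrt (r ^+ 2 + t ^+ 2)) * (t / Num.sqrt (r ^+ 2 + t ^+ 2)).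
Proof.
move=> r0; pose k h := Num.sqrt (r ^+ 2 + h ^+ 2).
pose F s := f (s *: ebasis i0).
have fE h : f (h *: ebasis i + (r *: ebasis i0 + t *: ebasis i)) = (F \o k) (h + t).
  rewrite /F /k /= f_radial; congr (f (_ *: _)).
  by rewrite -(enorm_ebasis2 _ _ _ _ i_neq_i0); congr enorm; rewrite scalerDl addrCA.
have f0 : f (r *: ebasis i0 + t *: ebasis i) = (F \o k) t.
  by rewrite /F /k /= f_radial enorm_ebasis2.
rewrite /partial (derive_transfer fE f0).
have k0 : 0 < k t by rewrite /k sqrtr_gt0 ltr_pwDl ?sqr_ge0 ?exprn_gt0.
have FkD := is_derive1_comp (g := k) (f_axisD _ k0) (is_derive_hypot r t r0).
by rewrite (@derive_val _ _ _ _ _ _ _ FkD) mulrC.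
Qed.

Lemma partial2_off_axis r : 0 < r -> {for r, continuous f1} ->
  partial (partial f i) i (r *: ebasis i0) = f1 r / r.
Proof.
move=> r0 f1c; pose k h := Num.sqrt (r ^+ 2 + h ^+ 2).
have k0r : k 0 = r by rewrite /k expr0n addr0 sqrtr_sqr ger0_norm // ltW.
pose Fn h := f1 (k h) / k h.
have quotE h : h != 0 ->
    h^-1 *: ((partial f i \o shift (r *: ebasis i0)) (h *: ebasis i)
             - partial f i (r *: ebasis i0)) = Fn h.
  move=> h0 /=; rewrite [h *: _ + _]addrC partial_off_axis //.
  rewrite -[r *: ebasis i0]addr0 -(scale0r (ebasis i : 'rV[R]_n)) partial_off_axis //.
  have kh : k h != 0 by rewrite gt_eqF // /k sqrtr_gt0 ltr_pwDl ?sqr_ge0 ?exprn_gt0.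
  have sE (a b : R) : a *: b = a * b by [].
  rewrite mul0r mulr0 subr0 /Fn -/(k h) sE.
  by field; rewrite kh h0.
rewrite /partial /derive; apply: (cvg_lim (@norm_hausdorff _ R^o)).
have Fnc : {for 0, continuous Fn}.
  have kc : {for 0, continuous k} := is_derive_cvg (is_derive_hypot r 0 r0).
  apply: continuousM; first by apply: continuous_comp => //; rewrite k0r.
  by apply: continuousV => //; rewrite k0r gt_eqF.
have := (continuous_withinNx Fn 0).1 Fnc; rewrite /Fn k0r => Fn_cvg.
apply: cvg_trans Fn_cvg; apply: near_eq_cvg; near=> h.
have h0 : h != 0 by near: h; exact: nbhs_dnbhs_neq.
by rewrite quotE.
Unshelve. all: by end_near.
Qed.

End OffAxis.

End RadialCalculus.

Section RadialSolution.
Context {R : realType} {n : nat}.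
Context {m alpha beta : R} {v : 'rV[R]_n -> R} {phi : R -> R}.
Variable i0 : 'I_n.
Hypothesis v_sol : is_solution m alpha beta v.
Hypothesis v_phi : radial_profile v phi.
Implicit Types (g : 'rV[R]_n -> R) (r s : R).

Let vm y := v y `^ m.
Let axis g s := g (s *: ebasis i0).

Let axis_phi s : 0 <= s -> axis v s = phi s.
Proof. by move=> s0; rewrite /axis v_phi enorm_scale_ebasis ger0_norm. Qed.

Let vm_radial y : vm y = vm (enorm y *: ebasis i0).
Proof. by rewrite /vm !v_phi enorm_scale_ebasis ger0_norm // sqrtr_ge0. Qed.

Let is_derive_axis g s : differentiable g (s *: ebasis i0) ->
  is_derive s (1 : R) (axis g) (axis (partial g i0) s).
Proof. by move=> dg; apply/is_derive_along/diff_derivable. Qed.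

Let axis_v_gt0 s : 0 < axis v s. Proof. by case: (v_sol (s *: ebasis i0)). Qed.

Let axis_vm_gt0 s : 0 < axis vm s. Proof. exact/powR_gt0/axis_v_gt0. Qed.

Let axis_vD s : is_derive s (1 : R) (axis v) (axis (partial v i0) s).
Proof. by apply: is_derive_axis; case: (v_sol (s *: ebasis i0)). Qed.

Let axis_vmD s : is_derive s (1 : R) (axis vm) (axis (partial vm i0) s).
Proof. by apply: is_derive_axis; case: (v_sol (s *: ebasis i0)). Qed.

Let axis_vm1D s :
  is_derive s (1 : R) (axis (partial vm i0)) (axis (partial (partial vm i0) i0) s).
Proof. by apply: is_derive_axis; case: (v_sol (s *: ebasis i0)). Qed.

Let axis_chain s :
  axis (partial vm i0) s * axis v s = m * axis vm s * axis (partial v i0) s.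
Proof.
have vs_neq0 : axis v s != 0 by rewrite gt_eqF.
have powD := is_derive1_comp (g := axis v) (is_derive1_powR m (axis_v_gt0 s)) (axis_vD s).
rewrite -(@derive_val _ _ _ _ _ _ _ (axis_vmD s)) (@derive_val _ _ _ _ _ _ _ powD).
have -> : axis vm s = axis v s `^ (m - 1) * axis v s.
  by rewrite -[X in _ * X]powRr1 ?ltW // -powRD ?vs_neq0 ?implybT // subrK.
by rewrite /=; ring.
Qed.

Let laplacian_axis r : 0 < r ->
  laplacian vm (r *: ebasis i0) =
    axis (partial (partial vm i0) i0) r + (n%:R - 1) * (axis (partial vm i0) r / r).
Proof.
move=> r0; rewrite /laplacian (bigD1 i0) //=; congr (_ + _).
rewrite (eq_bigr (fun=> axis (partial vm i0) r / r)) => [|i i_neq].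
  rewrite sumr_const cardC1 card_ord -[_ *+ _]mulr_natl -subn1 natrB //.
  exact: leq_ltn_trans (leq0n i0) (ltn_ord i0).
by apply: partial2_off_axis => //; exact: is_derive_cvg (axis_vm1D r).
Qed.

Let xdotgrad_axis r : xdotgrad v (r *: ebasis i0) = r * axis (partial v i0) r.
Proof.
rewrite /xdotgrad (bigD1 i0) //= big1 => [|i i_neq].
  by rewrite addr0 mxE ebasisE eqxx mulr1.
by rewrite mxE ebasisE (negbTE i_neq) mulr0 mul0r.
Qed.

Let axis_ode r : 0 < r ->
  (n%:R - 1) / m * (axis (partial (partial vm i0) i0) r
    + (n%:R - 1) * (axis (partial vm i0) r / r))
  + alpha * axis v r + beta * (r * axis (partial v i0) r) = 0.
Proof.
by move=> r0; rewrite -laplacian_axis // -xdotgrad_axis; case: (v_sol (r *: ebasis i0)).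
Qed.

(* [v^m] is differentiable and positive at the origin, so the elasticity tends to [0] there. *)
Let elasticity_axis_near0 c : c < 0 ->
  exists2 r, 0 < r & c < elasticity (axis vm) (axis (partial vm i0)) r.
Proof.
move=> c0; pose z := (fun s => s * axis (partial vm i0) s) \* (fun s => (axis vm s)^-1).
have zc : {for 0, continuous z}.
  apply: continuousM; first apply: (@continuousM _ R^o).
  - exact: cvg_id.
  - exact: is_derive_cvg (axis_vm1D 0).
  - by apply: continuousV; [rewrite gt_eqF | exact: is_derive_cvg (axis_vmD 0)].
have cz0 : c < z 0 by rewrite /z /= !mul0r.
have [e e0 ze] := cvg_gt_ball zc cz0.
exists (e / 2); first by rewrite divr_gt0.
apply: ze; rewrite sub0r normrN ger0_norm ?divr_ge0 ?ltW //.
by rewrite ltr_pdivrMr // ltr_pMr // ltr1n.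
Qed.

Lemma radial_solution_frequently_ge : 0 < m -> m < 1 -> 1 < n%:R :> R ->
  0 < beta -> 0 < alpha -> m * alpha < beta * (n%:R - 2) -> m / (1 - m) < n%:R - 2 ->
  exists2 e : R, 0 < e & forall R0 : R, exists r : R, R0 < r /\ e <= r ^+ 2 * phi r `^ (1 - m).
Proof.
move=> m_gt0 m_lt1 n_gt1 beta_gt0 alpha_gt0 malpha_lt m_lt.
have [e e0 He] := wprofile_frequently_ge n%:R m alpha beta
  (axis vm) (axis (partial vm i0)) (axis (partial (partial vm i0) i0))
  (axis v) (axis (partial v i0)) m_gt0 m_lt1 n_gt1 beta_gt0 alpha_gt0 malpha_lt m_lt
  (fun s _ => axis_vm_gt0 s) (fun s _ => axis_v_gt0 s) (fun s _ => axis_vmD s)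
  (fun s _ => axis_vm1D s) (fun s _ => axis_vD s) (fun s _ => axis_chain s)
  axis_ode elasticity_axis_near0.
exists e => // R0; have [r [+ er]] := He (Num.max R0 0).
rewrite gt_max => /andP[R0r r0]; exists r; split => //.
have phi_gt0 : 0 < phi r by rewrite -axis_phi ?(ltW r0).
by rewrite powRB ?gt_eqF ?implybT // powRr1 ?(ltW phi_gt0) // mulrA -axis_phi ?(ltW r0).
Qed.

End RadialSolution.

Lemma exponent_conditions {R : realFieldType} {N m rho alpha beta : R} :
  3 <= N -> 0 < m -> m < (N - 2) / N -> 0 < rho ->
  alpha = (2 * beta + rho) / (1 - m) -> m * rho / (N - 2 - m * N) < beta ->
  N * beta < alpha ->
  [/\ m < 1, 0 < beta, 0 < alpha, m * alpha < beta * (N - 2) & m / (1 - m) < N - 2].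
Proof.
move=> N3 m_gt0 m_lt rho_gt0 alphaE beta_gt N_beta_lt.
have N_gt0 : 0 < N by lra.
have mN : m * N < N - 2 by rewrite -ltr_pdivlMr.
have m_lt1 : m < 1 by rewrite -(ltr_pM2r N_gt0) mul1r; lra.
have m1_gt0 : 0 < 1 - m by rewrite subr_gt0.
have gap_gt0 : 0 < N - 2 - m * N by lra.
move: beta_gt; rewrite ltr_pdivrMr // => beta_gt.
have beta_gt0 : 0 < beta by have := mulr_gt0 m_gt0 rho_gt0; nra.
split=> //.
- exact: lt_trans (mulr_gt0 N_gt0 beta_gt0) N_beta_lt.
- by rewrite alphaE mulrA ltr_pdivrMr //; lra.
- by rewrite ltr_pdivrMr //; lra.
Qed.

Theorem lemma3p3 (R : realType) (n : nat) (m rho alpha beta : R)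
  (v : 'rV[R]_n -> R) (phi : R -> R) :
  (3 <= n)%N ->
  0 < m -> m < (n%:R - 2) / n%:R ->
  0 < rho ->
  alpha = (2 * beta + rho) / (1 - m) ->
  m * rho / (n%:R - 2 - m * n%:R) < beta ->
  n%:R * beta < alpha ->
  is_solution m alpha beta v ->
  radial_profile v phi ->
  let w := fun r : R => r ^+ 2 * phi r `^ (1 - m) in
  let w_inf := 2 * (n%:R - 1) * (n%:R * (1 - m) - 2)
               / ((1 - m) * (alpha * (1 - m) - 2 * beta)) in
  exists eps : R, 0 < eps /\ eps < Num.min 1 (w_inf / 2) /\
    forall R0 : R, 1 < R0 -> exists r' : R, R0 < r' /\ eps <= w r'.
Proof.
move=> n3 m_gt0 m_lt rho_gt0 alphaE beta_gt n_beta_lt v_sol v_phi w w_inf.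
have N3 : 3 <= n%:R :> R by rewrite (ler_nat R 3 n).
have [m_lt1 beta_gt0 alpha_gt0 malpha_lt mratio_lt] :=
  exponent_conditions N3 m_gt0 m_lt rho_gt0 alphaE beta_gt n_beta_lt.
have n_gt0 : (0 < n)%N by apply: leq_trans n3.
have n_gt1 : 1 < n%:R :> R by lra.
have [e e_gt0 w_ge] := radial_solution_frequently_ge (Ordinal n_gt0) v_sol v_phi
  m_gt0 m_lt1 n_gt1 beta_gt0 alpha_gt0 malpha_lt mratio_lt.
have w_inf_gt0 : 0 < w_inf.
  have rhoE : alpha * (1 - m) - 2 * beta = rho.
    by rewrite alphaE divfK ?gt_eqF ?subr_gt0 //; lra.
  have mn : m * n%:R < n%:R - 2 by rewrite -ltr_pdivlMr //; lra.
  by rewrite /w_inf rhoE !divr_gt0 ?mulr_gt0 ?subr_gt0 //; lra.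
pose c := Num.min 1 (w_inf / 2).
have c_gt0 : 0 < c by rewrite lt_min ltr01 divr_gt0.
exists (Num.min e (c / 2)); split; first by rewrite lt_min e_gt0 divr_gt0.
split; first by rewrite gt_min ltr_pdivrMr // ltr_pMr // ltr1n orbT.
move=> R0 _; have [r [R0r er]] := w_ge R0.
by exists r; split => //; apply: le_trans er; rewrite ge_min lexx.
Qed.
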